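(* Let $A$ be a unital associative $\mathbb{K}$-algebra. Then $(T^+(A),\bar\bullet^\ell,P_A)$ is a $TD$-algebra with unit $1_A\otimes 1_{\mathbb{K}}$; that is, for all $x,y\in T^+(A)$, $$P_A(x)\,\bar\bullet^\ell\,P_A(y)=P_A\bigl(x\,\bar\bullet^\ell\,P_A(y)+P_A(x)\,\bar\bullet^\ell\,y-x\,\bar\bullet^\ell\,P_A(1_A)\,\bar\bullet^\ell\,y\bigr),$$ where $P_A(1_A)=1_A\otimes1_A$.
   Context: $\mathbb{K}$ is a field of characteristic $0$, $A$ has product $[a;b]$ and unit $1_A$. $T(A)=\bigoplus_{n\ge0}A^{\otimes n}$ with $A^{\otimes0}=\mathbb{K}1_{\mathbb{K}}$; $a\otimes1_{\mathbb{K}}$ is identified with $a$. The left-shift shuffle $\bullet^\ell$ is the bilinear product on $T(A)$ with $k1_{\mathbb{K}}\bullet^\ell U=kU=U\bullet^\ell k1_{\mathbb{K}}$ and, for $a,b\in A$, $U,V\in T(A)$, $(a\otimes U)\bullet^\ell(b\otimes V)=a\otimes\bigl(U\bullet^\ell(b\otimes V)\bigr)+b\otimes\bigl((a\otimes U)\bullet^\ell V\bigr)-[a;b]\otimes1_A\otimes(U\bullet^\ell V)$; it is associative with unit $1_{\mathbb{K}}$. $T^+(A):=A\otimes T(A)=\bigoplus_{n\ge1}A^{\otimes n}$ with product $(a\otimes U)\,\bar\bullet^\ell\,(b\otimes V):=[a;b]\otimes(U\bullet^\ell V)$ and unit $1_A\otimes1_{\mathbb{K}}$ (identified with $1_A$).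 $P_A:T^+(A)\to T^+(A)$ is the linear map $P_A(a_1\otimes\cdots\otimes a_n)=1_A\otimes a_1\otimes\cdots\otimes a_n$. A $TD$-algebra is a pair $(B,P)$, $B$ a unital associative algebra, $P:B\to B$ linear with $P(x)P(y)=P\bigl(P(x)y+xP(y)\bigr)-P\bigl(x\,P(1_B)\,y\bigr)$ for all $x,y$. *)

From HB Require Import structures.
From mathcomp Require Import all_boot all_order all_algebra.
Set Implicit Arguments. Unset Strict Implicit. Unset Printing Implicit Defensive.
Import GRing.Theory.
Local Open Scope ring_scope.

(* Elements of T(A) = (+)_n A^{(x)n} are represented by formal finite sums
   [:: (k_1, w_1); ...; (k_m, w_m)] standing for  sum_i k_i w_i,
   where a word w = [:: a_1; ...; a_n] stands for the pure tensor
   a_1 (x) ... (x) a_n  (the empty word is 1_K in A^{(x)0} = K). *)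
Section TA.
Variables (K : fieldType) (A : algType K).

Definition fsum := seq (K * seq A).

Definition fscale (k : K) (x : fsum) : fsum := [seq (k * p.1, p.2) | p <- x].
Definition fcons (a : A) (x : fsum) : fsum := [seq (p.1, a :: p.2) | p <- x].

Fixpoint shw (u : seq A) : seq A -> fsum :=
  fix shw' (v : seq A) : fsum :=
    match u, v with
    | [::], _ => [:: (1, v)]
    | _, [::] => [:: (1, u)]
    | a :: u', b :: v' =>
        fcons a (shw u' v) ++ fcons b (shw' v')
        ++ fscale (-1) (fcons (a * b) (fcons 1 (shw u' v')))
    end.

Definition shuf (x y : fsum) : fsum :=
  flatten [seq flatten [seq fscale (p.1 * q.1) (shw p.2 q.2) | q <- y] | p <- x].

(* product \bar\bullet^l on T^+(A), on pure tensors: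
   (a (x) U) bar (b (x) V) = [a;b] (x) (U \bullet^l V).
   (It is only applied to words of length >= 1.) *)
Definition barw (u v : seq A) : fsum :=
  match u, v with
  | a :: u', b :: v' => fcons (a * b) (shw u' v')
  | _, _ => [::]
  end.

Definition bar (x y : fsum) : fsum :=
  flatten [seq flatten [seq fscale (p.1 * q.1) (barw p.2 q.2) | q <- y] | p <- x].

Definition PA (x : fsum) : fsum := fcons 1 x.

Definition oneA : fsum := [:: (1, [:: 1])].

Definition in_Tplus (x : fsum) : bool := all (fun p => p.2 != [::]) x.

(* A family f : seq A -> V of maps A^n -> V that is linear in each slot,
   i.e. the data of linear maps (+)_n A^{(x)n} -> V. *)
Definition multilinear (V : lmodType K) (f : seq A -> V) : Prop :=
  forall (u v : seq A) (k : K) (a b : A),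
    f (u ++ (k *: a + b) :: v) = k *: f (u ++ a :: v) + f (u ++ b :: v).

Definition feval (V : lmodType K) (f : seq A -> V) (x : fsum) : V :=
  \sum_(p <- x) p.1 *: f p.2.

(* Two formal sums denote the same element of T(A) (the tensor products
   being defined by their universal property). *)
Definition teq (x y : fsum) : Prop :=
  forall (V : lmodType K) (f : seq A -> V), multilinear f -> feval f x = feval f y.

End TA.

From mathcomp Require Import all_boot all_order all_algebra.
Local Open Scope ring_scope.
Import GRing.Theory.

(* Both sides are bilinear in (x, y), so it suffices to compare them on pure
   tensors [a :: u] and [b :: w].  There [P(a u) bar P(b w)] is [1 (x) (a u • b w)];
   expanding the shuffle once, its first two summands are [x bar P(y)] and
   [P(x) bar y], and its correction term is [x bar P(1) bar y], because shuffling
   with the single letter [1] merely prepends it. *)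

Section Evaluation.
Variables (K : fieldType) (A : algType K) (V : lmodType K).
Implicit Types (f g : seq A -> V) (x y : fsum A).

Lemma feval_cat f x y : feval f (x ++ y) = feval f x + feval f y.
Proof. by rewrite /feval big_cat. Qed.

Lemma feval_fcons f a x : feval f (fcons a x) = feval (fun w => f (a :: w)) x.
Proof. by rewrite /feval big_map. Qed.

Lemma feval_fscale f k x : feval f (fscale k x) = k *: feval f x.
Proof.
by rewrite /feval big_map scaler_sumr; apply: eq_bigr => p _; rewrite scalerA.
Qed.

Lemma feval_seq1 f w : feval f [:: (1, w)] = f w.
Proof. by rewrite /feval big_seq1 scale1r. Qed.

Lemma feval_flatten f (s : seq (fsum A)) :
  feval f (flatten s) = \sum_(t <- s) feval f t.
Proof.
elim: s => [|t s IH]; first by rewrite /feval !big_nil.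
by rewrite /= feval_cat IH big_cons.
Qed.

Lemma feval_addf f g x :
  feval (fun w => f w + g w) x = feval f x + feval g x.
Proof. by rewrite /feval -big_split; apply: eq_bigr => p _; rewrite scalerDr. Qed.

Lemma feval_scalef k f x : feval (fun w => k *: f w) x = k *: feval f x.
Proof.
rewrite /feval scaler_sumr; apply: eq_bigr => p _.
by rewrite !scalerA mulrC.
Qed.

Lemma feval_exchange (g : seq A -> seq A -> V) x y :
  feval (fun u => feval (g u) y) x = feval (fun v => feval (g^~ v) x) y.
Proof.
rewrite /feval; under eq_bigr do rewrite scaler_sumr.
rewrite exchange_big /=; apply: eq_bigr => q _.
by rewrite scaler_sumr; apply: eq_bigr => p _; rewrite !scalerA mulrC.
Qed.

Lemma eq_feval_Tplus f g x :
  in_Tplus x -> {in [pred w | w != [::]], f =1 g} -> feval f x = feval g x.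
Proof.
move=> /allP xT fg; apply: eq_big_seq => p px.
by rewrite fg //; apply: xT.
Qed.

Lemma feval_bar f x y :
  feval f (bar x y) = feval (fun u => feval (fun v => feval f (barw u v)) y) x.
Proof.
rewrite /bar feval_flatten big_map; apply: eq_bigr => -[k u] _.
rewrite feval_flatten big_map [RHS]scaler_sumr; apply: eq_bigr => -[l v] _.
by rewrite feval_fscale scalerA mulrC -scalerA.
Qed.

End Evaluation.

Section ShuffleUnit.
Variables (K : fieldType) (A : algType K) (V : lmodType K).
Implicit Types (f : seq A -> V) (u w : seq A).

Lemma shw_cons a b u w :
  shw (a :: u) (b :: w) = fcons a (shw u (b :: w)) ++ fcons b (shw (a :: u) w)
    ++ fscale (-1) (fcons (a * b) (fcons 1 (shw u w))).
Proof. by []. Qed.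

Lemma barw_cons a b u w : barw (a :: u) (b :: w) = fcons (a * b) (shw u w).
Proof. by []. Qed.

Lemma shw_nil_r u : shw u [::] = [:: (1, u)].
Proof. by case: u. Qed.

Lemma feval_shw_unit_r f u : feval f (shw u [:: 1]) = f (1 :: u).
Proof.
elim: u f => [|c u IH] f; first by rewrite feval_seq1.
rewrite shw_cons !feval_cat !feval_fscale !feval_fcons IH !shw_nil_r !feval_seq1.
by rewrite mulr1 scaleN1r addrCA subrr addr0.
Qed.

Lemma feval_shw_unit_l f u w :
  feval f (shw (1 :: u) w) = feval f (fcons 1 (shw u w)).
Proof.
elim: w f => [|c w IH] f; first by rewrite !shw_nil_r.
rewrite shw_cons !feval_cat !feval_fscale !feval_fcons IH feval_fcons mul1r.
by rewrite scaleN1r subrr addr0.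
Qed.

Lemma feval_barw_TD f a b u w :
  let f1 := fun t => f (1 :: t) in
  feval f (barw (1 :: a :: u) (1 :: b :: w)) =
    feval f1 (barw (a :: u) (1 :: b :: w)) + feval f1 (barw (1 :: a :: u) (b :: w))
    - feval (fun t => feval f1 (barw t (b :: w))) (barw (a :: u) [:: 1; 1]).
Proof.
move=> f1; rewrite !barw_cons !mul1r mulr1 shw_cons !feval_fcons !feval_cat.
rewrite feval_fscale !feval_fcons feval_shw_unit_r barw_cons feval_fcons.
by rewrite feval_shw_unit_l feval_fcons scaleN1r addrA.
Qed.

End ShuffleUnit.

Theorem proposition4p7 (K : fieldType) (A : algType K)
  (charK0 : [pchar K] =i pred0) (x y : fsum A) :
  in_Tplus x -> in_Tplus y ->
  teq (bar (PA x) (PA y))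
      (PA (bar x (PA y) ++ bar (PA x) y
           ++ fscale (-1) (bar (bar x (PA (oneA A))) y))).
Proof.
move=> xT yT V f _; set f1 := fun t => f (1 :: t).
have correction_term : feval f1 (bar (bar x (PA (oneA A))) y) =
    feval (fun u => feval (fun v =>
      feval (fun t => feval f1 (barw t v)) (barw u [:: 1; 1])) y) x.
  rewrite !feval_bar; apply: eq_bigr => p _.
  by rewrite feval_seq1 feval_exchange.
rewrite /PA feval_fcons -/f1 !feval_cat feval_fscale correction_term !feval_bar.
rewrite !feval_fcons -feval_scalef -!feval_addf.
apply: eq_feval_Tplus => // -[//|a u] _.
rewrite !feval_fcons -feval_scalef -!feval_addf.
apply: eq_feval_Tplus => // -[//|b w] _.
by rewrite feval_barw_TD scaleN1r addrA.
Qed.
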